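(* Let $\Gamma$ be a MaxSAT instance encoded with blocking variables $b_1,\dots,b_m$, with $\mathrm{cost}(\Gamma)=k$. Then there is a derivation in the cost-SPR calculus from $\Gamma$ of the unit clauses $b_{i_1},\dots,b_{i_k}$ for some $k$ distinct indices $i_1,\dots,i_k$ and of all unit clauses $\lnot b_j$ for $j\notin\{i_1,\dots,i_k\}$.
   Context: Literals, clauses, CNFs (multisets of clauses), $\mathrm{Var}(\Gamma)$. A substitution $\sigma$ maps each variable to $0$, $1$ or a literal, extended by $\sigma(\lnot x)=\lnot\sigma(x)$, $\sigma(0)=0$, $\sigma(1)=1$; $(\sigma\circ\tau)(x)=\sigma(\tau(x))$. A (partial) assignment has $\sigma(x)\in\{0,1,x\}$; its domain is $\sigma^{-1}(\{0,1\})$; total means all variables get Boolean values. $C{\upharpoonright}_\sigma$: apply $\sigma$ to each literal and simplify; $\sigma\models C$ if the result is $1$ or tautological; $\Gamma{\upharpoonright}_\sigma$ is the multiset of $C{\upharpoonright}_\sigma\neq1$ for $C\in\Gamma$. $\lnot C$ is the partial assignment falsifying all literals of $C$; $\tau\supseteq\rho$ means $\tau$ extends $\rho$. $\Gamma\vdash_1 C$ means unit propagation on $\Gamma{\upharpoonright}_{\lnot C}$ derives the empty clause; $\Gamma\vdash_1\Delta$ means $\Gamma\vdash_1 D$ for all $D\in\Delta$. A MaxSAT instance encoded with blocking variables is a CNF $\Gamma=H\cup\{C_1\lor b_1,\dots,C_m\lor b_m\}$ with distinct fresh variables $b_i$ (blocking variables). $\mathrm{cost}(\alpha)=\sum_i\alpha(b_i)$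 for total $\alpha$; $\mathrm{cost}(\Gamma)=\min\{\mathrm{cost}(\alpha):\alpha\models\Gamma\}$. A clause $C$ is cost-SR w.r.t. $\Gamma$ via $\sigma$ if (1) $\Gamma{\upharpoonright}_{\lnot C}\vdash_1(\Gamma\cup\{C\}){\upharpoonright}_\sigma$ and (2) $\mathrm{cost}(\tau\circ\sigma)\le\mathrm{cost}(\tau)$ for all total $\tau\supseteq\lnot C$. It is cost-SPR if such a $\sigma$ exists that is a partial assignment with the same domain as $\lnot C$. A derivation in the cost-SPR calculus from $\Gamma$ is a sequence $D_1,\dots,D_t$ where each $D_i$ is in $\Gamma$, or follows from earlier clauses by weakening or resolution, or is cost-SPR w.r.t. $\Gamma\cup\{D_1,\dots,D_{i-1}\}$ with $\mathrm{Var}(D_i)\subseteq\mathrm{Var}(\Gamma)$. *)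

From Stdlib Require Import List Bool Arith.
Import ListNotations.

(** Variables are natural numbers; a literal is (polarity, variable),
    polarity [true] = positive literal x, [false] = negated literal ~x. *)
Definition var := nat.
Definition lit := (bool * var)%type.
Definition clause := list lit.
Definition cnf := list clause.          (* multiset of clauses *)

Definition lit_eqb (l1 l2 : lit) : bool :=
  Bool.eqb (fst l1) (fst l2) && Nat.eqb (snd l1) (snd l2).
Definition neg_lit (l : lit) : lit := (negb (fst l), snd l).

Definition clause_vars (C : clause) : list var := map snd C.
Definition cnf_vars (F : cnf) : list var := flat_map clause_vars F.

Inductive term := TConst (b : bool) | TLit (l : lit).
Definition subst := var -> term.

Definition neg_term (t : term) : term :=
  match t with TConst b => TConst (negb b) | TLit l => TLit (neg_lit l) end.

Definition apply_lit (s : subst) (l : lit) : term :=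
  if fst l then s (snd l) else neg_term (s (snd l)).

(** C|_sigma : [None] means the result is 1 (some literal became 1, or the
    result is tautological); otherwise [Some D] with the 0's removed. *)
Definition restrict_clause (s : subst) (C : clause) : option clause :=
  let ts := map (apply_lit s) C in
  let ls := flat_map (fun t => match t with TLit l => [l] | TConst _ => [] end) ts in
  if existsb (fun t => match t with TConst true => true | _ => false end) ts
     || existsb (fun l => existsb (lit_eqb (neg_lit l)) ls) ls
  then None else Some ls.

Definition restrict_cnf (s : subst) (F : cnf) : cnf :=
  flat_map (fun C => match restrict_clause s C with
                     | None => [] | Some D => [D] end) F.

Definition negC (C : clause) : subst := fun x =>
  if existsb (lit_eqb (true, x)) C then TConst false
  else if existsb (lit_eqb (false, x)) C then TConst true
  else TLit (true, x).

Inductive up_refutes : cnf -> Prop :=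
| up_conflict (F : cnf) : In [] F -> up_refutes F
| up_step (F : cnf) (l : lit) :
    In [l] F -> up_refutes (restrict_cnf (negC [neg_lit l]) F) -> up_refutes F.

Definition implies1 (F : cnf) (C : clause) : Prop :=
  up_refutes (restrict_cnf (negC C) F).
Definition implies1_all (F G : cnf) : Prop :=
  forall D, In D G -> implies1 F D.

Definition asg := var -> bool.
Definition lit_val (a : asg) (l : lit) : bool :=
  if fst l then a (snd l) else negb (a (snd l)).
Definition term_val (a : asg) (t : term) : bool :=
  match t with TConst b => b | TLit l => lit_val a l end.
Definition sat_clause (a : asg) (C : clause) : Prop :=
  exists l, In l C /\ lit_val a l = true.
Definition sat_cnf (a : asg) (F : cnf) : Prop :=
  forall C, In C F -> sat_clause a C.

Definition compose (t : asg) (s : subst) : asg := fun x => term_val t (s x).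

Definition extends_negC (t : asg) (C : clause) : Prop :=
  forall l, In l C -> lit_val t l = false.

Definition cost (bs : list var) (a : asg) : nat :=
  list_sum (map (fun b => if a b then 1 else 0) bs).

Definition cnf_cost_is (bs : list var) (F : cnf) (k : nat) : Prop :=
  (exists a, sat_cnf a F /\ cost bs a = k) /\
  (forall a, sat_cnf a F -> k <= cost bs a).

Definition cost_SR (bs : list var) (F : cnf) (C : clause) (s : subst) : Prop :=
  implies1_all (restrict_cnf (negC C) F) (restrict_cnf s (C :: F)) /\
  (forall t, extends_negC t C -> cost bs (compose t s) <= cost bs t).

Definition is_partial_assignment (s : subst) : Prop :=
  forall x, s x = TConst true \/ s x = TConst false \/ s x = TLit (true, x).

Definition cost_SPR (bs : list var) (F : cnf) (C : clause) : Prop :=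
  exists s, is_partial_assignment s /\
    (forall x, (exists b, s x = TConst b) <-> In x (clause_vars C)) /\
    cost_SR bs F C s.

Definition cspr_step (bs : list var) (G : cnf) (prev : list clause) (D : clause)
  : Prop :=
  In D G
  \/ (exists D', In D' prev /\ incl D' D)
  \/ (exists C1 C2 x, In C1 prev /\ In C2 prev /\
        In (true, x) C1 /\ In (false, x) C2 /\
        (forall l, In l D <->
           ((In l C1 /\ l <> (true, x)) \/ (In l C2 /\ l <> (false, x)))))
  \/ (cost_SPR bs (G ++ prev) D /\ incl (clause_vars D) (cnf_vars G)).

Inductive cspr_derivation (bs : list var) (G : cnf) : list clause -> Prop :=
| deriv_nil : cspr_derivation bs G []
| deriv_snoc (ds : list clause) (D : clause) :
    cspr_derivation bs G ds -> cspr_step bs G ds D ->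
    cspr_derivation bs G (ds ++ [D]).

Definition maxsat_cnf (H : cnf) (Cs : list clause) (bs : list var) : cnf :=
  H ++ map (fun p => fst p ++ [(true, snd p)]) (combine Cs bs).

Definition blocking_ok (H : cnf) (Cs : list clause) (bs : list var) : Prop :=
  length Cs = length bs /\ NoDup bs /\
  (forall b, In b bs -> ~ In b (cnf_vars H) /\ ~ In b (cnf_vars Cs)).

From Stdlib Require Import List Bool Arith Lia Classical.
Import ListNotations.

(* Fix an optimal assignment [opt] of the instance and, for an assignment [a] on
   the variables [ws] of the instance, let [forbid ws a] be the clause excluding
   it.  If [a] differs from [opt], then [forbid ws a] is derivable: when [a]
   falsifies an input clause it is a weakening of that clause; otherwise it is
   cost-SPR with witness [opt] restricted to [ws].  Indeed every clause derived
   so far is satisfied by [opt], so the reduct under the witness is empty, and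
   the witness has optimal cost.  Resolving these clauses on all variables but
   [x] gives the unit clause asserting [opt x]; over the blocking variables,
   exactly [cost opt = k] of these units are positive. *)

Definition forbid (ws : list var) (a : asg) : clause :=
  map (fun x => (negb (a x), x)) ws.

Definition asg_upd (a : asg) (x : var) (b : bool) : asg :=
  fun y => if Nat.eqb y x then b else a y.

Definition restrict_asg (ws : list var) (a : asg) : subst :=
  fun x => if in_dec Nat.eq_dec x ws then TConst (a x) else TLit (true, x).

Definition sat_clause_on (vs : list var) (a : asg) (D : clause) : Prop :=
  exists l, In l D /\ lit_val a l = true /\ In (snd l) vs.

Lemma lit_val_false (a : asg) (p : bool) (x : var) :
  lit_val a (p, x) = false -> p = negb (a x).
Proof. unfold lit_val; simpl; destruct p, (a x); simpl; congruence. Qed.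

Lemma in_clause_vars (l : lit) (D : clause) : In l D -> In (snd l) (clause_vars D).
Proof. exact (in_map snd D l). Qed.

Lemma in_cnf_vars (l : lit) (D : clause) (F : cnf) :
  In D F -> In l D -> In (snd l) (cnf_vars F).
Proof. intros HD Hl; apply in_flat_map; exists D; auto using in_clause_vars. Qed.

Lemma sat_clause_on_incl (vs ws : list var) (a : asg) (D : clause) :
  incl vs ws -> sat_clause_on vs a D -> sat_clause_on ws a D.
Proof. intros Hvw [l [Hl [Hv Hx]]]; exists l; auto. Qed.

Lemma sat_cnf_ext (a a' : asg) (F : cnf) :
  (forall x, In x (cnf_vars F) -> a x = a' x) -> sat_cnf a F -> sat_cnf a' F.
Proof.
  intros Haa' Hsat D HD; destruct (Hsat D HD) as [[p x] [Hl Hv]].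
  exists (p, x); split; auto.
  unfold lit_val in *; simpl in *.
  rewrite <- Haa'; [exact Hv | exact (in_cnf_vars _ _ _ HD Hl)].
Qed.

Lemma cost_ext (bs : list var) (a a' : asg) :
  (forall b, In b bs -> a b = a' b) -> cost bs a = cost bs a'.
Proof. intros Haa'; unfold cost; f_equal; apply map_ext_in; intros b Hb; now rewrite Haa'. Qed.

Lemma cost_filter (bs : list var) (a : asg) : cost bs a = length (filter a bs).
Proof.
  unfold cost; induction bs as [|b bs IH]; simpl; auto.
  rewrite IH; now destruct (a b).
Qed.

Lemma clause_vars_forbid (ws : list var) (a : asg) : clause_vars (forbid ws a) = ws.
Proof. induction ws; simpl; f_equal; auto. Qed.

Lemma in_forbid (ws : list var) (a : asg) (x : var) :
  In x ws -> In (negb (a x), x) (forbid ws a).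
Proof. exact (in_map (fun x => (negb (a x), x)) ws x). Qed.

Lemma extends_forbid (t a : asg) (ws : list var) (x : var) :
  extends_negC t (forbid ws a) -> In x ws -> t x = a x.
Proof.
  intros Ht Hx; pose proof (lit_val_false _ _ _ (Ht _ (in_forbid _ _ _ Hx))) as E.
  destruct (t x), (a x); simpl in E; congruence.
Qed.

Lemma sat_clause_on_forbid (vs ps : list var) (a a' : asg) :
  incl ps vs -> (exists x, In x ps /\ a x <> a' x) -> sat_clause_on vs a' (forbid ps a).
Proof.
  intros Hps [x [Hx Hd]]; exists (negb (a x), x); repeat split; auto using in_forbid.
  unfold lit_val; simpl; destruct (a x), (a' x); simpl; congruence.
Qed.

Lemma incl_forbid (D : clause) (ws : list var) (a : asg) :
  incl (clause_vars D) ws -> (forall l, In l D -> lit_val a l = false) ->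
  incl D (forbid ws a).
Proof.
  intros Hws Hfalse [p x] Hl; rewrite (lit_val_false _ _ _ (Hfalse _ Hl)).
  apply in_forbid, Hws, (in_clause_vars (p, x)), Hl.
Qed.

Lemma forbid_snoc_upd (ps : list var) (x : var) (a : asg) (b : bool) :
  ~ In x ps -> forbid (ps ++ [x]) (asg_upd a x b) = forbid ps a ++ [(negb b, x)].
Proof.
  intros Hx; unfold forbid, asg_upd; rewrite map_app; simpl; rewrite Nat.eqb_refl.
  f_equal; apply map_ext_in; intros y Hy.
  destruct (Nat.eqb_spec y x); [subst; contradiction | reflexivity].
Qed.

Lemma restrict_asg_partial (ws : list var) (a : asg) :
  is_partial_assignment (restrict_asg ws a).
Proof. intros x; unfold restrict_asg; destruct (in_dec Nat.eq_dec x ws), (a x); auto. Qed.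

Lemma restrict_asg_domain (ws : list var) (a : asg) (x : var) :
  (exists b, restrict_asg ws a x = TConst b) <-> In x ws.
Proof.
  unfold restrict_asg; destruct (in_dec Nat.eq_dec x ws); split; eauto.
  - intros [b Hb]; discriminate.
  - contradiction.
Qed.

Lemma apply_lit_restrict_asg (ws : list var) (a : asg) (l : lit) :
  In (snd l) ws -> apply_lit (restrict_asg ws a) l = TConst (lit_val a l).
Proof.
  destruct l as [[] x]; unfold apply_lit, restrict_asg, lit_val; simpl;
    intros Hx; destruct (in_dec Nat.eq_dec x ws); easy.
Qed.

Lemma compose_restrict_asg (t a : asg) (ws : list var) (x : var) :
  In x ws -> compose t (restrict_asg ws a) x = a x.
Proof. intros Hx; unfold compose, restrict_asg; now destruct (in_dec Nat.eq_dec x ws). Qed.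

Lemma restrict_cnf_sat (s : subst) (F : cnf) :
  (forall D, In D F -> exists l, In l D /\ apply_lit s l = TConst true) ->
  restrict_cnf s F = [].
Proof.
  induction F as [|D F IH]; simpl; intros Hsat; auto.
  destruct (Hsat D (or_introl eq_refl)) as [l [Hl Hs]].
  unfold restrict_clause at 1; cbv zeta.
  replace (existsb _ (map (apply_lit s) D)) with true.
  - apply IH; auto.
  - symmetry; apply existsb_exists; exists (TConst true); split; auto.
    rewrite <- Hs; apply in_map, Hl.
Qed.

Lemma forbid_cost_SPR (bs : list var) (G F : cnf) (ws : list var) (opt a : asg) :
  incl (cnf_vars G) ws -> incl bs ws -> sat_cnf a G ->
  (forall a', sat_cnf a' G -> cost bs opt <= cost bs a') ->
  (forall D, In D (forbid ws a :: F) -> sat_clause_on ws opt D) ->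
  cost_SPR bs F (forbid ws a).
Proof.
  intros HGws Hbsws Ha Hmin Hsat.
  exists (restrict_asg ws opt); split; [apply restrict_asg_partial | split; [|split]].
  - intros x; rewrite clause_vars_forbid; apply restrict_asg_domain.
  - rewrite (restrict_cnf_sat _ (forbid ws a :: F)); [intros D []|].
    intros D HD; destruct (Hsat D HD) as [l [Hl [Hv Hx]]].
    exists l; split; auto; now rewrite apply_lit_restrict_asg, Hv.
  - intros t Ht.
    assert (Hta : forall x, In x ws -> t x = a x) by (intros x; apply extends_forbid, Ht).
    rewrite (cost_ext bs _ opt) by (intros b Hb; apply compose_restrict_asg, Hbsws, Hb).
    apply Hmin, (sat_cnf_ext a); auto.
    intros x Hx; symmetry; apply Hta, HGws, Hx.
Qed.

Lemma derivation_of_incl (bs : list var) (G ds : cnf) :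
  incl ds G -> cspr_derivation bs G ds.
Proof.
  induction ds as [|D ds IH] using rev_ind; intros Hds; constructor.
  - apply IH; intros E HE; apply Hds, in_or_app; auto.
  - left; apply Hds, in_or_app; simpl; auto.
Qed.

Lemma forbid_resolution_step (bs : list var) (G ds : cnf) (ps : list var) (a : asg)
    (x : var) :
  ~ In x ps -> In (forbid ps a ++ [(true, x)]) ds -> In (forbid ps a ++ [(false, x)]) ds ->
  cspr_step bs G ds (forbid ps a).
Proof.
  intros Hx Hpos Hneg; right; right; left.
  exists (forbid ps a ++ [(true, x)]), (forbid ps a ++ [(false, x)]), x.
  do 4 (split; [solve [auto | apply in_or_app; simpl; auto]|]).
  intros l; split.
  - intros Hl; left; split; [apply in_or_app; auto|].
    intros ->; apply Hx; rewrite <- (clause_vars_forbid ps a); exact (in_clause_vars _ _ Hl).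
  - intros [[Hl Hne] | [Hl Hne]]; apply in_app_or in Hl; simpl in Hl; intuition congruence.
Qed.

Section OptimalUnits.

Variables (bs : list var) (G : cnf) (opt : asg).
Hypothesis opt_sat : sat_cnf opt G.
Hypothesis opt_min : forall a, sat_cnf a G -> cost bs opt <= cost bs a.
Hypothesis bs_vars : incl bs (cnf_vars G).

Definition opt_derivation (ds : list clause) : Prop :=
  cspr_derivation bs G ds /\ incl G ds /\
  forall D, In D ds -> sat_clause_on (cnf_vars G) opt D.

Lemma opt_derivation_base : opt_derivation G.
Proof.
  split; [apply derivation_of_incl, incl_refl | split; [apply incl_refl|]].
  intros D HD; destruct (opt_sat D HD) as [l [Hl Hv]].
  exists l; eauto using in_cnf_vars.
Qed.

Lemma opt_derivation_snoc (ds : list clause) (D : clause) :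
  opt_derivation ds -> cspr_step bs G ds D -> sat_clause_on (cnf_vars G) opt D ->
  opt_derivation (ds ++ [D]).
Proof.
  intros [Hder [HG Hopt]] Hstep HD; split; [constructor; auto | split].
  - apply incl_appl, HG.
  - intros E HE; apply in_app_or in HE; destruct HE as [HE | [<- | []]]; auto.
Qed.

Lemma forbid_step (ws : list var) (ds : list clause) (a : asg) :
  incl ws (cnf_vars G) -> incl (cnf_vars G) ws -> opt_derivation ds ->
  (exists x, In x ws /\ a x <> opt x) ->
  cspr_step bs G ds (forbid ws a).
Proof.
  intros HwsG HGws [_ [HG Hopt]] Hdiff.
  destruct (classic (exists D, In D G /\ forall l, In l D -> lit_val a l = false))
    as [[D [HD Hfalse]] | Ha_sat].
  - right; left; exists D; split; [apply HG, HD|].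
    apply incl_forbid; auto.
    intros x Hx; apply HGws, in_flat_map; eauto.
  - right; right; right; split; [|now rewrite clause_vars_forbid].
    apply (forbid_cost_SPR bs G _ _ opt); auto.
    + now apply (incl_tran bs_vars).
    + intros D HD; destruct (classic (sat_clause a D)) as [|Hunsat]; auto.
      exfalso; apply Ha_sat; exists D; split; auto.
      intros l Hl; apply not_true_is_false; intros Hv; apply Hunsat; now exists l.
    + intros D [<- | HD]; [exact (sat_clause_on_forbid ws ws a opt (incl_refl ws) Hdiff)|].
      apply (sat_clause_on_incl (cnf_vars G)); auto.
      apply in_app_or in HD; destruct HD; auto.
Qed.

Lemma forbid_derivable (ws : list var) :
  NoDup ws -> incl ws (cnf_vars G) -> incl (cnf_vars G) ws ->
  forall qs ps a ds, ps ++ qs = ws -> (exists x, In x ps /\ a x <> opt x) ->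
  opt_derivation ds ->
  exists ds', opt_derivation ds' /\ incl ds ds' /\ In (forbid ps a) ds'.
Proof.
  intros Hnd HwsG HGws; induction qs as [|x qs IH]; intros ps a ds Hws Hdiff Hds.
  - rewrite app_nil_r in Hws; subst ps.
    exists (ds ++ [forbid ws a]); split; [|split; [apply incl_appl, incl_refl|]].
    + apply opt_derivation_snoc; auto using forbid_step, sat_clause_on_forbid.
    + apply in_or_app; simpl; auto.
  - assert (Hx : ~ In x ps).
    { rewrite <- Hws in Hnd; apply NoDup_remove_2 in Hnd.
      intros Hx; apply Hnd, in_or_app; auto. }
    assert (Hws' : (ps ++ [x]) ++ qs = ws) by now rewrite <- app_assoc.
    assert (Hdiff' : forall b, exists y, In y (ps ++ [x]) /\ asg_upd a x b y <> opt y).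
    { intros b; destruct Hdiff as [y [Hy Hyd]]; exists y; split; [apply in_or_app; auto|].
      unfold asg_upd; destruct (Nat.eqb_spec y x); [subst; contradiction | exact Hyd]. }
    destruct (IH _ _ ds Hws' (Hdiff' false) Hds) as [ds1 [Hds1 [Hincl1 Hpos]]].
    destruct (IH _ _ ds1 Hws' (Hdiff' true) Hds1) as [ds2 [Hds2 [Hincl2 Hneg]]].
    rewrite forbid_snoc_upd in Hpos, Hneg by exact Hx.
    exists (ds2 ++ [forbid ps a]); split; [|split].
    + apply opt_derivation_snoc; auto.
      * apply (forbid_resolution_step _ _ _ _ _ x); auto.
      * apply sat_clause_on_forbid; auto.
        intros y Hy; apply HwsG; rewrite <- Hws; apply in_or_app; auto.
    + intros D HD; apply in_or_app; auto.
    + apply in_or_app; simpl; auto.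
Qed.

Lemma unit_derivable (x : var) (ds : list clause) :
  In x (cnf_vars G) -> opt_derivation ds ->
  exists ds', opt_derivation ds' /\ incl ds ds' /\ In [(opt x, x)] ds'.
Proof.
  intros Hx Hds.
  set (rest := nodup Nat.eq_dec (remove Nat.eq_dec x (cnf_vars G))).
  assert (Hrest : forall y, In y rest <-> In y (cnf_vars G) /\ y <> x).
  { intros y; unfold rest; rewrite nodup_In.
    split; [apply in_remove | intros [Hy Hne]; apply in_in_remove; auto]. }
  destruct (forbid_derivable ([x] ++ rest)) with (qs := rest) (ps := [x])
    (a := fun y => negb (opt y)) (ds := ds) as [ds' [Hds' [Hincl Hunit]]]; auto.
  - constructor; [rewrite Hrest; tauto | apply NoDup_nodup].
  - intros y [<- | Hy]; [exact Hx | apply Hrest, Hy].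
  - intros y Hy; destruct (Nat.eq_dec y x) as [<- | Hne];
      [left; auto | right; apply Hrest; auto].
  - exists x; split; [left; auto | now destruct (opt x)].
  - exists ds'; split; [|split]; auto.
    simpl in Hunit; now rewrite negb_involutive in Hunit.
Qed.

Lemma units_derivable (xs : list var) :
  incl xs (cnf_vars G) ->
  exists ds, opt_derivation ds /\ forall x, In x xs -> In [(opt x, x)] ds.
Proof.
  induction xs as [|x xs IH]; intros Hxs.
  - exists G; split; [apply opt_derivation_base | intros x []].
  - destruct IH as [ds [Hds Hunits]]; [intros y Hy; apply Hxs; right; exact Hy|].
    destruct (unit_derivable x ds) as [ds' [Hds' [Hincl Hunit]]];
      [apply Hxs; left; auto | exact Hds |].
    exists ds'; split; auto.
    intros y [<- | Hy]; auto.
Qed.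

End OptimalUnits.

Lemma blocking_vars_in_maxsat_cnf (H : cnf) (Cs : list clause) (bs : list var) :
  length Cs = length bs -> incl bs (cnf_vars (maxsat_cnf H Cs bs)).
Proof.
  intros Hlen b Hb; destruct (In_nth bs b 0 Hb) as [i [Hi <-]].
  apply (in_cnf_vars (true, nth i bs 0) (nth i Cs [] ++ [(true, nth i bs 0)])).
  - apply in_or_app; right.
    apply (in_map (fun p => fst p ++ [(true, snd p)]) _ (nth i Cs [], nth i bs 0)).
    rewrite <- combine_nth by exact Hlen; apply nth_In.
    rewrite length_combine, Hlen; lia.
  - apply in_or_app; simpl; auto.
Qed.

Lemma map_nth_seq {A : Type} (l : list A) (d : A) :
  map (fun i => nth i l d) (seq 0 (length l)) = l.
Proof.
  induction l as [|a l IH]; simpl; f_equal.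
  rewrite <- seq_shift, map_map; exact IH.
Qed.

Lemma length_filter_indices {A : Type} (f : A -> bool) (l : list A) (d : A) :
  length (filter (fun i => f (nth i l d)) (seq 0 (length l))) = length (filter f l).
Proof. now rewrite <- (length_map (fun i => nth i l d)), <- filter_map_swap, map_nth_seq. Qed.

Theorem theorem4p3 (H : cnf) (Cs : list clause) (bs : list var) (k : nat) :
  blocking_ok H Cs bs ->
  cnf_cost_is bs (maxsat_cnf H Cs bs) k ->
  exists (ds : list clause) (I : list nat),
    cspr_derivation bs (maxsat_cnf H Cs bs) ds /\
    NoDup I /\ length I = k /\
    (forall i, In i I -> i < length bs) /\
    (forall i, In i I -> In [(true, nth i bs 0)] ds) /\
    (forall j, j < length bs -> ~ In j I -> In [(false, nth j bs 0)] ds).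
Proof.
  intros [Hlen _] [[opt [Hsat Hcost]] Hopt]; subst k.
  pose proof (blocking_vars_in_maxsat_cnf H Cs bs Hlen) as Hbs.
  destruct (units_derivable bs _ opt Hsat Hopt Hbs bs Hbs) as [ds [[Hder _] Hunits]].
  exists ds, (filter (fun i => opt (nth i bs 0)) (seq 0 (length bs))).
  repeat split; auto.
  - apply NoDup_filter, seq_NoDup.
  - now rewrite length_filter_indices, cost_filter.
  - intros i Hi; apply filter_In in Hi; destruct Hi as [Hi _]; apply in_seq in Hi; lia.
  - intros i Hi; apply filter_In in Hi; destruct Hi as [Hi Hbit]; apply in_seq in Hi.
    rewrite <- Hbit; apply Hunits, nth_In; lia.
  - intros j Hj Hnot; destruct (opt (nth j bs 0)) eqn:Hbit.
    + exfalso; apply Hnot, filter_In; split; auto; apply in_seq; lia.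
    + rewrite <- Hbit; apply Hunits, nth_In; exact Hj.
Qed.
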